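(* Assume that $\bar r^j \in \mathrm{recc}(C)$ for every $j \in N_0$. Then every $x \in P^B \setminus C$ satisfies at least one of the two inequalities $$\sum_{j \in N} \frac{x_j}{\alpha_j} \le 1 \qquad\text{or}\qquad \sum_{j \in N} \frac{x_j}{\beta_j} \ge 1 .$$
   Context: Let $A\in\mathbb{R}^{m\times n}$ have full row rank, $b\in\mathbb{R}^m$, and $P=\{x\in\mathbb{R}^n_+ : Ax=b\}$. Let $C\subseteq\mathbb{R}^n$ be an open convex set. Fix a basis $B\subseteq\{1,\dots,n\}$ of $P$ with nonbasic index set $N=\{1,\dots,n\}\setminus B$. Write $P=\{x\in\mathbb{R}^n : x_i=\bar b_i-\sum_{j\in N}\bar a_{ij}x_j\ (i\in B),\ x_j\ge 0\ (j=1,\dots,n)\}$ for some $\bar a\in\mathbb{R}^{|B|\times|N|}$ and $\bar b\in\mathbb{R}^{|B|}_+$. The basic solution $\bar x$ is given by $\bar x_i=\bar b_i$ for $i\in B$ and $\bar x_i=0$ for $i\in N$. The set $P^B\supseteq P$ is obtained from this description by dropping the constraints $x_i\ge0$ for $i\in B$. For $j\in N$ let $\bar r^j\in\mathbb{R}^n$ be given by $\bar r^j_k=-\bar a_{kj}$ for $k\in B$, $\bar r^j_j=1$, and $\bar r^j_k=0$ for $k\in N\setminus\{j\}$. Then $P^B=\{\bar x+\sum_{j\in N}x_j\bar r^j : x_j\ge 0\ \forall j\in N\}$. For $x\in P^B$, the coordinates $x_j$ ($j\in N$) are exactly the coefficients in this representation. It is assumed that $\bar x\notin\mathrm{cl}(C)$.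 For $j\in N$ let $\alpha_j=\inf\{\lambda\ge0:\bar x+\lambda\bar r^j\in C\}$ and $\beta_j=\sup\{\lambda\ge0:\bar x+\lambda\bar r^j\in C\}$. By convention, $\alpha_j=+\infty$ and $\beta_j=-\infty$ if the halfline $\{\bar x+\lambda\bar r^j:\lambda\ge0\}$ does not intersect $C$. The set $N$ is partitioned into - $N_0=\{j\in N:\alpha_j=+\infty,\ \beta_j=-\infty\}$, - $N_1=\{j\in N:\alpha_j\in(0,+\infty),\ \beta_j=+\infty\}$, - $N_2=\{j\in N:\alpha_j\in(0,+\infty),\ \beta_j\in(\alpha_j,+\infty)\}$. We use the convention $t/\pm\infty=0$. For a set $K\subseteq\mathbb{R}^n$, $\mathrm{recc}(K)=\{d\in\mathbb{R}^n: x+\lambda d\in K\ \forall x\in K,\ \forall\lambda\ge0\}$ denotes its recession cone. *)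

From HB Require Import structures.
From mathcomp Require Import all_boot all_order all_algebra.
From mathcomp Require Import all_classical all_reals all_analysis.
Set Implicit Arguments. Unset Strict Implicit. Unset Printing Implicit Defensive.
Import Order.TTheory GRing.Theory Num.Theory.
Import numFieldNormedType.Exports.
Local Open Scope classical_set_scope.
Local Open Scope ring_scope.

Definition recc (R : realType) (n : nat) (K : set 'rV[R]_n) : set 'rV[R]_n :=
  [set d | forall x, K x -> forall lam : R, 0 <= lam -> K (x + lam *: d)].

Definition alpha_of (R : realType) (n : nat) (C : set 'rV[R]_n) (xb r : 'rV[R]_n)
  : \bar R :=
  ereal_inf [set (lam%:E) | lam in [set lam : R | 0 <= lam /\ C (xb + lam *: r)]].

Definition beta_of (R : realType) (n : nat) (C : set 'rV[R]_n) (xb r : 'rV[R]_n)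
  : \bar R :=
  ereal_sup [set (lam%:E) | lam in [set lam : R | 0 <= lam /\ C (xb + lam *: r)]].

(* t / a with the convention t / (+-oo) = 0. *)
Definition divE (R : realType) (t : R) (a : \bar R) : R :=
  match a with
  | EFin r => t / r
  | _ => 0
  end.

Definition basic_sol (R : realType) (n : nat) (B : {set 'I_n}) (bb : 'I_n -> R)
  : 'rV[R]_n := \row_k (if k \in B then bb k else 0).

Definition ray (R : realType) (n : nat) (B : {set 'I_n}) (ab : 'I_n -> 'I_n -> R)
  (j : 'I_n) : 'rV[R]_n :=
  \row_k (if k \in B then - ab k j else if k == j then 1 else 0).

Definition tableau_set (R : realType) (n : nat) (B : {set 'I_n})
  (ab : 'I_n -> 'I_n -> R) (bb : 'I_n -> R) : set 'rV[R]_n :=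
  [set x | (forall i, i \in B -> x 0 i = bb i - \sum_(j in ~: B) ab i j * x 0 j)
           /\ (forall k, 0 <= x 0 k)].

(* P^B: drop the constraints x_i >= 0 for i in B. *)
Definition PB (R : realType) (n : nat) (B : {set 'I_n})
  (ab : 'I_n -> 'I_n -> R) (bb : 'I_n -> R) : set 'rV[R]_n :=
  [set x | (forall i, i \in B -> x 0 i = bb i - \sum_(j in ~: B) ab i j * x 0 j)
           /\ (forall j, j \in ~: B -> 0 <= x 0 j)].

From HB Require Import structures.
From mathcomp Require Import all_boot all_order all_algebra.
From mathcomp Require Import all_classical all_reals all_analysis.
From mathcomp Require Import ring lra.
Set Implicit Arguments. Unset Strict Implicit. Unset Printing Implicit Defensive.
Import Order.TTheory GRing.Theory Num.Theory.
Import numFieldNormedType.Exports.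
Local Open Scope classical_set_scope.
Local Open Scope ring_scope.

(* Suppose [x] violates both inequalities, i.e. [S := sum_j x_j / alpha_j > 1] and
   [T := sum_j x_j / beta_j < 1].  For [s := (S - 1) / (S - T)] in [(0, 1)] the weights
   [v_j := (1 - s) / alpha_j + s / beta_j] satisfy [sum_j x_j v_j = 1].  If [v_j > 0],
   then [1 / v_j] lies between [alpha_j] and [beta_j], so by convexity the point
   [xb + r^j / v_j] of the j-th ray is in [C]; if [v_j = 0], the ray misses [C] and
   [r^j] is a recession direction of [C].  Hence [x = xb + sum_j x_j r^j] is a convex
   combination of points of [C] moved along recession directions, so [x] is in [C].
   Neither the openness of [C] nor the description of [P] by [A] and [b] is needed. *)

Section ConvexCombination.
Variables (R : numFieldType) (M : lmodType R) (A : set (convex_lmodType M)).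
Hypothesis convA : convex_set A.

Lemma convex_set_segment (x y : M) (t : R) :
  0 <= t -> t <= 1 -> A x -> A y -> A (t *: x + (1 - t) *: y).
Proof.
move=> t_ge0 t_le1 Ax Ay.
by have := @convA x y (Itv01 t_ge0 t_le1) (mem_set Ax) (mem_set Ay); rewrite inE.
Qed.

Lemma convex_set_sum (I : eqType) (s : seq I) (P : pred I) (mu : I -> R) (p : I -> M) :
  (forall i, P i -> 0 <= mu i) -> \sum_(i <- s | P i) mu i = 1 ->
  (forall i, P i -> 0 < mu i -> A (p i)) -> A (\sum_(i <- s | P i) mu i *: p i).
Proof.
elim: s mu => [|i s IH] mu mu_ge0.
  by rewrite big_nil => /esym/eqP; rewrite oner_eq0.
rewrite !big_cons; case: ifP => Pi; last exact: IH.
set c := \sum_(j <- s | P j) mu j => mu_sum Ap.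
have [mui0 | mui_neq0] := eqVneq (mu i) 0.
  by rewrite mui0 scale0r add0r; apply: IH; rewrite // -mu_sum mui0 add0r.
have mui_gt0 : 0 < mu i by rewrite lt_def mui_neq0 mu_ge0.
have c_ge0 : 0 <= c by exact: sumr_ge0.
have [c0 | c_neq0] := eqVneq c 0.
  have mui1 : mu i = 1 by rewrite -mu_sum c0 addr0.
  have /eqP := c0; rewrite psumr_eq0 // => /allP mu0.
  rewrite big1_seq => [|j /andP[Pj /mu0]]; last by rewrite Pj => /eqP ->; rewrite scale0r.
  by rewrite addr0 mui1 scale1r; apply: Ap; rewrite ?mui1.
have c_gt0 : 0 < c by rewrite lt_def c_neq0.
have A_rest : A (c^-1 *: \sum_(j <- s | P j) mu j *: p j).
  rewrite scaler_sumr (eq_bigr (fun j => (c^-1 * mu j) *: p j)) => [|j _]; last first.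
    by rewrite scalerA.
  apply: IH => [j Pj | | j Pj]; first by rewrite mulr_ge0 ?invr_ge0 ?mu_ge0.
    by rewrite -mulr_sumr mulVf.
  by rewrite pmulr_rgt0 ?invr_gt0 //; exact: Ap.
have c_eq : 1 - mu i = c by rewrite -mu_sum addrC addKr.
have mui_le1 : mu i <= 1 by rewrite -subr_ge0 c_eq.
have := convex_set_segment (ltW mui_gt0) mui_le1 (Ap i Pi mui_gt0) A_rest.
by rewrite c_eq scalerA divff // scale1r.
Qed.

End ConvexCombination.

Lemma ltr_convex_comb (R : numDomainType) (x y s : R) :
  y < x -> 0 < s < 1 -> y < (1 - s) * x + s * y < x.
Proof.
move=> yx /andP[s_gt0 s_lt1]; rewrite -[y < _]subr_gt0 -[_ < x]subr_gt0.
have -> : (1 - s) * x + s * y - y = (1 - s) * (x - y) by ring.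
have -> : x - ((1 - s) * x + s * y) = s * (x - y) by ring.
by rewrite !mulr_gt0 ?subr_gt0.
Qed.

Lemma divE_mul (R : realType) (t : R) (a : \bar R) : divE t a = t * divE 1 a.
Proof. by case: a => [a| |] /=; rewrite ?mulr0 // mulrA mulr1. Qed.

Lemma divE_ge0 (R : realType) (t : R) (a : \bar R) :
  0 <= t -> (0 <= a)%E -> 0 <= divE t a.
Proof. by case: a => [a| |] //= t_ge0; rewrite lee_fin => a_ge0; rewrite divr_ge0. Qed.

Definition ray_hits (R : realType) (n : nat) (C : set 'rV[R]_n) (xb r : 'rV[R]_n)
  : set R := [set lam | 0 <= lam /\ C (xb + lam *: r)].

Definition ray_weight (R : realType) (n : nat) (C : set 'rV[R]_n) (xb r : 'rV[R]_n)
  (s : R) : R :=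
  (1 - s) * divE 1 (alpha_of C xb r) + s * divE 1 (beta_of C xb r).

Section Ray.
Variables (R : realType) (n : nat) (C : set 'rV[R]_n) (xb r : 'rV[R]_n).
Local Notation L := (ray_hits C xb r).
Local Notation alpha := (alpha_of C xb r).
Local Notation beta := (beta_of C xb r).

Lemma alpha_ofE : alpha = ereal_inf [set lam%:E | lam in L].
Proof. by []. Qed.

Lemma beta_ofE : beta = ereal_sup [set lam%:E | lam in L].
Proof. by []. Qed.

Lemma ray_hits_empty : L = set0 -> alpha = +oo%E /\ beta = -oo%E.
Proof. by rewrite alpha_ofE beta_ofE => ->; rewrite image_set0 ereal_inf0 ereal_sup0. Qed.

Lemma alpha_of_le l : L l -> (alpha <= l%:E)%E.
Proof. by move=> Ll; apply: ereal_inf_lbound; exists l. Qed.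

Lemma beta_of_ge l : L l -> (l%:E <= beta)%E.
Proof. by move=> Ll; apply: ereal_sup_ubound; exists l. Qed.

Lemma alpha_of_ge0 : (0 <= alpha)%E.
Proof. by apply: le_ereal_inf_tmp => _ [l [l_ge0 _] <-]; rewrite lee_fin. Qed.

Hypothesis convC : convex_set (C : set (convex_lmodType 'rV[R]_n)).

Lemma ray_hits_segment l1 l2 lam : L l1 -> L l2 -> l1 <= lam <= l2 -> L lam.
Proof.
move=> [l1_ge0 C1] [_ C2] /andP[l1_le l_le2]; split; first exact: le_trans l1_le.
have [l12 | l1_neq2] := eqVneq l1 l2.
  by have -> : lam = l1 by apply/eqP; rewrite eq_le l1_le l12 l_le2.
have d_gt0 : 0 < l2 - l1 by rewrite subr_gt0 lt_def eq_sym l1_neq2 (le_trans l1_le).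
pose t := (l2 - lam) / (l2 - l1).
have t_ge0 : 0 <= t by rewrite divr_ge0 ?subr_ge0 ?(le_trans l1_le).
have t_le1 : t <= 1 by rewrite ler_pdivrMr // mul1r lerD2l lerN2.
have := convex_set_segment convC t_ge0 t_le1 C1 C2.
rewrite !scalerDr !scalerA addrACA -scalerDl subrKC scale1r -scalerDl.
suff -> : t * l1 + (1 - t) * l2 = lam by [].
by rewrite /t; field; rewrite gt_eqF.
Qed.

Lemma ray_hits_between lam : (alpha < lam%:E)%E -> (lam%:E < beta)%E -> L lam.
Proof.
rewrite alpha_ofE beta_ofE => /ereal_inf_lt[_ [l1 L1 <-]] l1_lt /ereal_sup_gt[_ [l2 L2 <-]].
by rewrite !lte_fin in l1_lt * => lt_l2; apply: ray_hits_segment L1 L2 _; rewrite !ltW.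
Qed.

Hypothesis xb_notin_clC : ~ closure C xb.

Lemma alpha_of_gt0 : (0 < alpha)%E.
Proof.
rewrite lt_def alpha_of_ge0 andbT; apply/eqP => alpha0.
apply: xb_notin_clC => U /nbhs_ballP[e /= e_gt0 eU].
have nr_gt0 : 0 < `|r| + 1 by rewrite ltr_wpDl.
have : (alpha < (e / (`|r| + 1))%:E)%E by rewrite alpha0 lte_fin divr_gt0.
rewrite alpha_ofE => /ereal_inf_lt[_ [l [l_ge0 Cl] <-]]; rewrite lte_fin => l_lt.
exists (xb + l *: r); split => //; apply: eU.
rewrite -ball_normE /= opprD addrA subrr sub0r normrN normrZ ger0_norm //.
apply: le_lt_trans (_ : l * (`|r| + 1) < e); first by rewrite ler_wpM2l // lerDl.
by rewrite -ltr_pdivlMr.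
Qed.

Lemma alpha_of_fin l0 : L l0 -> exists2 a, alpha = a%:E & 0 < a.
Proof.
move=> L0; case: alpha alpha_of_gt0 (alpha_of_le L0) => [a||] //= a_gt0 _.
by exists a; rewrite // -lte_fin.
Qed.

Lemma ray_hits_inv_weight l0 s : L l0 -> 0 < s < 1 -> L (ray_weight C xb r s)^-1.
Proof.
move=> L0 s01; have [a alphaE a_gt0] := alpha_of_fin L0.
have a_le0 : a <= l0 by rewrite -lee_fin -alphaE alpha_of_le.
have ia_gt0 : 0 < a^-1 by rewrite invr_gt0.
have a_lt_inv v : 0 < v < a^-1 -> (alpha < v^-1%:E)%E.
  by case/andP=> v_gt0 v_lt; rewrite alphaE lte_fin -[a]invrK ltf_pV2 ?posrE.
rewrite /ray_weight alphaE /= div1r.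
case beta_eq : beta (beta_of_ge L0) => [b||] //= l0_le; last first.
  have /andP[v_gt0 v_lt] := ltr_convex_comb ia_gt0 s01.
  by apply: ray_hits_between; [apply: a_lt_inv; rewrite v_gt0 | rewrite beta_eq ltry].
rewrite lee_fin in l0_le; rewrite div1r.
have [ab | a_neq_b] := eqVneq a b.
  have a_l0 : a = l0 by apply/le_anti; rewrite a_le0 ab l0_le.
  by rewrite -ab -mulrDl subrK mul1r invrK a_l0.
have ab_lt : a < b by rewrite lt_def eq_sym a_neq_b (le_trans a_le0).
have b_gt0 : 0 < b by exact: lt_trans ab_lt.
have ib_lt : b^-1 < a^-1 by rewrite ltf_pV2 ?posrE.
have /andP[ib_ltv v_lt] := ltr_convex_comb ib_lt s01.
have v_gt0 : 0 < (1 - s) / a + s / b by apply: lt_trans ib_ltv; rewrite invr_gt0.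
apply: ray_hits_between; first by apply: a_lt_inv; rewrite v_gt0.
by rewrite beta_eq lte_fin -[X in _ < X]invrK ltf_pV2 ?posrE ?invr_gt0.
Qed.

Lemma ray_weight_cases s : 0 < s < 1 ->
  (ray_weight C xb r s = 0 /\ alpha = +oo%E /\ beta = -oo%E)
  \/ (0 < ray_weight C xb r s /\ C (xb + (ray_weight C xb r s)^-1 *: r)).
Proof.
move=> s01; have [L0 | /set0P[l0 L0]] := eqVneq L set0.
  have [alpha_oo beta_oo] := ray_hits_empty L0.
  by left; rewrite /ray_weight alpha_oo beta_oo /= !mulr0 addr0.
right; split; last exact: (ray_hits_inv_weight L0 s01).2.
have [a alphaE a_gt0] := alpha_of_fin L0; have /andP[s_gt0 s_lt1] := s01.
have beta_ge0 : (0 <= beta)%E by rewrite (le_trans _ (beta_of_ge L0)) // lee_fin; case: L0.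
rewrite /ray_weight alphaE /=; apply: ltr_wpDr.
  by rewrite mulr_ge0 ?divE_ge0 // ltW.
by rewrite mulr_gt0 ?subr_gt0 ?divr_gt0.
Qed.

End Ray.

Lemma recc_addr_sum (R : realType) (n : nat) (C : set 'rV[R]_n) (I : Type) (s : seq I)
  (P : pred I) (c : I -> R) (d : I -> 'rV[R]_n) (y : 'rV[R]_n) :
  C y -> (forall i, P i -> 0 <= c i /\ recc C (d i)) ->
  C (y + \sum_(i <- s | P i) c i *: d i).
Proof.
move=> Cy Pd; apply: (big_rec (fun z => C (y + z))); first by rewrite addr0.
by move=> i z /Pd[c_ge0 recc_d] Cz; rewrite addrCA addrC; exact: recc_d.
Qed.

Lemma mem_conic_recc (R : realType) (n : nat) (C : set 'rV[R]_n)
  (convC : convex_set (C : set (convex_lmodType 'rV[R]_n)))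
  (I : finType) (J : {set I}) (xb : 'rV[R]_n) (r : I -> 'rV[R]_n) (x v : I -> R) :
  (forall j, j \in J -> 0 <= x j) -> \sum_(j in J) x j * v j = 1 ->
  (forall j, j \in J ->
     (v j = 0 /\ recc C (r j)) \/ (0 < v j /\ C (xb + (v j)^-1 *: r j))) ->
  C (xb + \sum_(j in J) x j *: r j).
Proof.
move=> x_ge0 xv_sum vP.
have v_ge0 j : j \in J -> 0 <= v j by case/vP => [[->]|[/ltW]].
have Cy : C (xb + \sum_(j in J | v j != 0) x j *: r j).
  have -> : xb + \sum_(j in J | v j != 0) x j *: r j
          = \sum_(j in J) (x j * v j) *: (xb + (v j)^-1 *: r j).
    under [RHS]eq_bigr do rewrite scalerDr scalerA -mulrA.
    rewrite big_split /= -scaler_suml xv_sum scale1r; congr (_ + _).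
    rewrite [RHS](bigID (fun j => v j != 0)) /= [X in _ = _ + X]big1 ?addr0.
      by apply: eq_bigr => j /andP[_ vj]; rewrite divff // mulr1.
    by move=> j /andP[_]; rewrite negbK => /eqP ->; rewrite mul0r mulr0 scale0r.
  apply: convex_set_sum => // [j jJ | j jJ]; first by rewrite mulr_ge0 ?x_ge0 ?v_ge0.
  by case: (vP j jJ) => [[-> _]|[_ //]]; rewrite mulr0 ltxx.
rewrite (bigID (fun j => v j != 0)) /= addrA.
apply: recc_addr_sum Cy _ => j /andP[jJ /negPn/eqP vj0]; split; first exact: x_ge0.
by case: (vP j jJ) => [[]|[]] //; rewrite vj0 ltxx.
Qed.

Lemma PB_ray_sum (R : realType) (n : nat) (B : {set 'I_n})
  (ab : 'I_n -> 'I_n -> R) (bb : 'I_n -> R) (x : 'rV[R]_n) :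
  PB B ab bb x -> x = basic_sol B bb + \sum_(j in ~: B) x 0 j *: ray B ab j.
Proof.
move=> [x_B _]; apply/rowP => k; rewrite !mxE summxE.
under eq_bigr do rewrite !mxE.
case: ifP => kB.
  rewrite x_B // -sumrN; congr (_ + _); apply: eq_bigr => j _.
  by rewrite mulrN mulrC.
rewrite add0r (bigD1 k) /=; last by rewrite inE kB.
rewrite eqxx mulr1 big1 ?addr0 // => j /andP[_ jk].
by rewrite eq_sym (negbTE jk) mulr0.
Qed.

Theorem theorem1 (R : realType) (m n : nat)
  (A : 'M[R]_(m, n)) (b : 'cV[R]_m)
  (hA : \rank A = m)
  (B : {set 'I_n})
  (hBcard : #|B| = m)
  (hBbasis : forall y : 'cV[R]_n,
      A *m y = 0 -> (forall k, k \notin B -> y k 0 = 0) -> y = 0)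
  (ab : 'I_n -> 'I_n -> R) (bb : 'I_n -> R)
  (hbb : forall i, i \in B -> 0 <= bb i)
  (hP : forall x : 'rV[R]_n,
      ((forall k, 0 <= x 0 k) /\ A *m x^T = b) <-> tableau_set B ab bb x)
  (C : set 'rV[R]_n)
  (hCopen : open C)
  (hCconv : convex_set (C : set (convex_lmodType 'rV[R]_n)))
  (hxb : ~ closure C (basic_sol B bb))
  (hN0 : forall j, j \in ~: B ->
      alpha_of C (basic_sol B bb) (ray B ab j) = +oo%E ->
      beta_of C (basic_sol B bb) (ray B ab j) = -oo%E ->
      recc C (ray B ab j)) :
  forall x : 'rV[R]_n, PB B ab bb x -> ~ C x ->
    \sum_(j in ~: B) divE (x 0 j) (alpha_of C (basic_sol B bb) (ray B ab j)) <= 1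
    \/ 1 <= \sum_(j in ~: B) divE (x 0 j) (beta_of C (basic_sol B bb) (ray B ab j)).
Proof.
move=> x x_PB x_notin_C.
set xb := basic_sol B bb in hxb hN0 *; set r := ray B ab in hN0 *.
pose u j := divE 1 (alpha_of C xb (r j)); pose w j := divE 1 (beta_of C xb (r j)).
under eq_bigr => j _ do rewrite divE_mul -/(u j).
under [X in _ \/ _ <= X]eq_bigr => j _ do rewrite divE_mul -/(w j).
set S := \sum_(j in _) _ * u j; set T := \sum_(j in _) _ * w j.
have [S_le1 | S_gt1] := lerP S 1; first by left.
have [T_ge1 | T_lt1] := lerP 1 T; first by right.
exfalso; apply: x_notin_C.
have ST_gt0 : 0 < S - T by lra.
pose s := (S - 1) / (S - T).
have s01 : 0 < s < 1.
  by apply/andP; split; rewrite /s ?divr_gt0 ?ltr_pdivrMr ?mul1r ?subr_gt0 //; lra.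
rewrite (PB_ray_sum x_PB).
apply: (mem_conic_recc hCconv (v := fun j => ray_weight C xb (r j) s)).
- by move=> j /x_PB.2.
- under eq_bigr do rewrite mulrDr mulrCA [_ * (s * _)]mulrCA.
  by rewrite big_split /= -!mulr_sumr -/S -/T /s; field; rewrite gt_eqF.
- move=> j jN.
  have [[w0 [alpha_oo beta_oo]] | w_pos] := ray_weight_cases (r j) hCconv hxb s01.
    by left; split; last exact: hN0.
  by right.
Qed.
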